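(* Let $F$ be a CNF formula and let $\pi$ be a refutation of $F$ (a derivation $\pi$ from $F$ using instructions $\mathrm{del}$, $\mathrm{rup}$, $\mathrm{sr}$, $\mathrm{wsr}$ with $\vdash_\bot\mathrm{acc}(F,\pi)$). Then $\mathcal{T}(F,\pi):F\triangleright\{\bot\}$, i.e.\ the proof term $\mathcal{T}(F,\pi)$ derives the dynamic formula $\{[\,].\bot\}$ from the dynamic formula $\{[\,].C:C\in F\}$.
   Context: CNF setting: literals $x,\neg x,\top,\bot$ with complements; substitutions $\sigma$ on literals with $\sigma(\top)=\top$, $\sigma(\overline l)=\overline{\sigma(l)}$ (finite if identity on almost all variables); $(I\circ\sigma)(x)=1$ iff $I\vDash\sigma(x)$. Static constraints are clauses $l_1\vee\dots\vee l_n$ and cubes $l_1\wedge\dots\wedge l_n$, negated by De Morgan duality (swapping $\vee,\wedge$ and complementing literals), with reducts applying $\sigma$ literalwise; $\bot$ denotes the unit clause $\bot$. A CNF formula is a finite set of static constraints. Conflict detection $\vdash_\bot F$ is unit propagation: with $U(F)$ the least set of literals containing $\top$, all literals of cubes in $F$, and $l_i$ whenever $l_1\vee\dots\vee l_n\in F$ and $\overline{l_j}\in U(F)$ for all $j\ne i$, $\vdash_\bot F$ holds iff $\bot\in U(F)$, or $x,\neg x\in U(F)$ for some variable $x$, or some clause of $F$ has all its literals' complements in $U(F)$. RUP/SR/WSR: $C$ is RUP over $F$ if $\vdash_\bot F\cup\{\overline C\}$; SR over $F$ upon $\sigma$ if $\vdash_\bot\{\overline{C[\sigma]}\}$ and $\vdash_\bot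 F\cup\{\overline C,\overline{D[\sigma]}\}$ for all $D\in F$; WSR over $F$ upon $\sigma$ modulo $G$ if $\vdash_\bot F\cup\{\overline C,\overline{D[\sigma]}\}$ for all $D\in(F\setminus G)\cup\{C\}$. Accumulated formula: $\mathrm{acc}(F,[\,])=F$; $\mathrm{del}(C)$ removes $C$; $\mathrm{rup}(C)$, $\mathrm{sr}(C,\sigma)$ add $C$; $\mathrm{wsr}(C,\sigma,G)$ removes $G$ then adds $C$. A derivation from $F$ is an instruction list where each $\mathrm{rup}$/$\mathrm{sr}$/$\mathrm{wsr}$ instruction's clause is RUP/SR upon $\sigma$/WSR upon $\sigma$ modulo $G$ over the accumulated formula before it ($\mathrm{del}$ always allowed). Programs, dynamic constraints/formulas, $\vdash_{\mathrm{dyn}}$, and proof terms with the relation $\pi:\varGamma\triangleright\varDelta$ are as follows. Program items: $\langle\sigma\rangle$, $T?$, $\varepsilon_1\sqcup\varepsilon_2$, $\mathrm{if}\ T\ \mathrm{then}\ \varepsilon_1\parallel\varepsilon_0$ (semantics: $J=I\circ\sigma$; $I\vDash T$ and $J=I$; either; as $\varepsilon_1$ if $I\vDash T$ else as $\varepsilon_0$); programs are lists of items with sequential composition; $\mathrm{if}\ T\ \mathrm{then}\ \varepsilon$ abbreviates $\mathrm{if}\ T\ \mathrm{then}\ \varepsilon\parallel[\,]$. $\varepsilon.C$ holds at $I$ iff $J\vDash C$ whenever $I\otimes J\vDash\varepsilon$; $\delta.(\varepsilon.C)=(\delta\varepsilon).C$; $\varepsilon.G=\{\varepsilon.C:C\in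 G\}$; static $C$ identified with $[\,].C$. $\varGamma@\varepsilon=\{\varPhi:\varepsilon.\varPhi\in\varGamma\}$, $\varGamma{\downarrow}=\{[\,].C\in\varGamma\}$. Reduct of a dynamic constraint: $\varPhi[\sigma]$ with $I\vDash\varPhi[\sigma]$ iff $I\circ\sigma\vDash\varPhi$ and $([\,].C)[\sigma]=[\,].C[\sigma]$. $\varGamma\vdash_{\mathrm{dyn}}\varPhi$ iff $\varGamma\Rightarrow\varPhi$ reduces by the rules (N1) $\varGamma\Rightarrow\langle\sigma\rangle.\varPhi\mapsto\varGamma\Rightarrow\varPhi[\sigma]$; (N2) $\varGamma\Rightarrow(\varepsilon_1\sqcup\varepsilon_2).\varPhi\mapsto\varGamma\Rightarrow\varepsilon_1.\varPhi$, $\varGamma\Rightarrow\varepsilon_2.\varPhi$; (N3) $\varGamma\Rightarrow T?.\varPhi\mapsto\varGamma\cup\{T\}\Rightarrow\varPhi$; (N4) $\varGamma\Rightarrow(\mathrm{if}\ T\ \mathrm{then}\ \varepsilon_1\parallel\varepsilon_0).\varPhi\mapsto\varGamma\cup\{T\}\Rightarrow\varepsilon_1.\varPhi$, $\varGamma\cup\{\overline T\}\Rightarrow\varepsilon_0.\varPhi$; (P1) $\varGamma\cup\langle\sigma\rangle.\varDelta\Rightarrow\varPhi\mapsto\varGamma\cup\varDelta[\sigma]\Rightarrow\varPhi$; (P2) $\varGamma\cup(\varepsilon_1\sqcup\varepsilon_2).\varDelta\Rightarrow\varPhi\mapsto\varGamma\cup\varepsilon_1.\varDelta\cup\varepsilon_2.\varDelta\Rightarrow\varPhi$;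 (P3) $\varGamma\cup T?.\varDelta\Rightarrow\varPhi\mapsto\varGamma\cup\varDelta\cup\{T\}\Rightarrow\varPhi$, $\varGamma\cup\{\overline T\}\Rightarrow\varPhi$; (P4) $\varGamma\cup(\mathrm{if}\ T\ \mathrm{then}\ \varepsilon_1\parallel\varepsilon_0).\varDelta\Rightarrow\varPhi\mapsto\varGamma\cup\varepsilon_1.\varDelta\cup\{T\}\Rightarrow\varPhi$, $\varGamma\cup\varepsilon_0.\varDelta\cup\{\overline T\}\Rightarrow\varPhi$, to implications $[\,].F_i\Rightarrow[\,].C_i$ with only empty contexts and $\vdash_\bot F_i\cup\{\overline{C_i}\}$ for all $i$. Proof terms: $\mathrm{qed}$, $\mathrm{elim}\,\pi$, $\mathrm{lem}(\varTheta,\rho)\,\pi$, $\mathrm{ctx}(\varepsilon,\rho)\,\pi$, with: $\mathrm{qed}:\varGamma\triangleright\varDelta$ iff $\varGamma{\downarrow}\vdash_{\mathrm{dyn}}\varPhi$ for all $\varPhi\in\varDelta$; $\mathrm{elim}\,\pi:\varGamma\triangleright\varDelta$ iff $\varGamma\vdash_{\mathrm{dyn}}\varPhi$ for all $\varPhi\in\varDelta{\downarrow}$ and $\pi:\varGamma\cup\varDelta{\downarrow}\triangleright\varDelta\setminus\varDelta{\downarrow}$; $\mathrm{lem}(\varTheta,\rho)\,\pi:\varGamma\triangleright\varDelta$ iff $\rho:\varGamma\triangleright\varTheta$ and $\pi:\varGamma\cup\varTheta\triangleright\varDelta\setminus\varTheta$; $\mathrm{ctx}(\varepsilon,\rho)\,\pi:\varGamma\triangleright\varDelta$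 iff $\rho:\varGamma@\varepsilon\triangleright\varDelta@\varepsilon$ and $\pi:\varGamma\cup\varepsilon.(\varDelta@\varepsilon)\triangleright\varDelta\setminus\varepsilon.(\varDelta@\varepsilon)$. Translation $\mathcal{T}$ (processing instructions from the front): $\mathcal{T}(F,[\,])=\mathrm{qed}$; $\mathcal{T}(F,\mathrm{rup}(C)\,\pi)=\mathrm{lem}(\{C\},\mathrm{qed})\,\mathcal{T}(F\cup\{C\},\pi)$; $\mathcal{T}(F,\mathrm{del}(C)\,\pi)=\mathcal{T}(F\setminus\{C\},\pi)$; $\mathcal{T}(F,\mathrm{sr}(C,\sigma)\,\pi)$ and $\mathcal{T}(F,\mathrm{wsr}(C,\sigma,G)\,\pi)$ both equal $\mathrm{lem}\big(\{\varepsilon.\bot\},\ \mathrm{lem}(\varepsilon.F',\mathrm{qed})\ \mathrm{ctx}(\varepsilon,\mathcal{T}(F',\pi))\ \mathrm{qed}\big)\ \mathrm{elim}\ \mathrm{qed}$, where $\varepsilon=\mathrm{if}\ \overline C\ \mathrm{then}\ \langle\sigma\rangle$ and $F'=F\cup\{C\}$ in the $\mathrm{sr}$ case, $F'=(F\setminus G)\cup\{C\}$ in the $\mathrm{wsr}$ case. *)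

From Stdlib Require Import List.
Import ListNotations.

Definition setU {A : Type} (X Y : A -> Prop) : A -> Prop := fun a => X a \/ Y a.
Definition setD {A : Type} (X Y : A -> Prop) : A -> Prop := fun a => X a /\ ~ Y a.
Definition set1 {A : Type} (x : A) : A -> Prop := fun a => a = x.
Definition ofList {A : Type} (l : list A) : A -> Prop := fun a => In a l.
Definition img {A B : Type} (f : A -> B) (X : A -> Prop) : B -> Prop :=
  fun b => exists a, X a /\ b = f a.

Inductive lit : Type := LTop | LBot | LPos (x : nat) | LNeg (x : nat).

Definition lcompl (l : lit) : lit :=
  match l with LTop => LBot | LBot => LTop | LPos x => LNeg x | LNeg x => LPos x end.

Definition subst := nat -> lit.

Definition lsubst (s : subst) (l : lit) : lit :=
  match l with
  | LTop => LTop | LBot => LBot | LPos x => s x | LNeg x => lcompl (s x)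
  end.

(* reduct of the substitution t by s:  x |-> s(t(x));  (I o s) o t = I o (scomp t s) *)
Definition scomp (t s : subst) : subst := fun x => lsubst s (t x).

Inductive scon : Type := Clause (ls : list lit) | Cube (ls : list lit).

Definition sneg (C : scon) : scon :=
  match C with
  | Clause ls => Cube (map lcompl ls)
  | Cube ls => Clause (map lcompl ls)
  end.

Definition sred (s : subst) (C : scon) : scon :=
  match C with
  | Clause ls => Clause (map (lsubst s) ls)
  | Cube ls => Cube (map (lsubst s) ls)
  end.

Definition botC : scon := Clause [LBot].

Definition sset := scon -> Prop.

Inductive UP (F : sset) : lit -> Prop :=
| UP_top : UP F LTop
| UP_cube ls l : F (Cube ls) -> In l ls -> UP F l
| UP_clause ls i : F (Clause ls) -> i < length ls ->
    (forall j, j < length ls -> j <> i -> UP F (lcompl (nth j ls LTop))) ->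
    UP F (nth i ls LTop).

Definition conflict (F : sset) : Prop :=
  UP F LBot \/
  (exists x, UP F (LPos x) /\ UP F (LNeg x)) \/
  (exists ls, F (Clause ls) /\ forall l, In l ls -> UP F (lcompl l)).

Definition RUP (C : scon) (F : sset) : Prop := conflict (setU F (set1 (sneg C))).

Definition SR (C : scon) (s : subst) (F : sset) : Prop :=
  conflict (set1 (sneg (sred s C))) /\
  forall D, F D -> conflict (setU F (setU (set1 (sneg C)) (set1 (sneg (sred s D))))).

Definition WSR (C : scon) (s : subst) (G : sset) (F : sset) : Prop :=
  forall D, setU (setD F G) (set1 C) D ->
    conflict (setU F (setU (set1 (sneg C)) (set1 (sneg (sred s D))))).

Inductive instr : Type :=
| IDel (C : scon)
| IRup (C : list lit)
| ISr  (C : list lit) (s : subst)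
| IWsr (C : list lit) (s : subst) (G : list scon).

Definition step (F : sset) (i : instr) : sset :=
  match i with
  | IDel C => setD F (set1 C)
  | IRup C => setU F (set1 (Clause C))
  | ISr C _ => setU F (set1 (Clause C))
  | IWsr C _ G => setU (setD F (ofList G)) (set1 (Clause C))
  end.

Fixpoint acc (F : sset) (p : list instr) : sset :=
  match p with [] => F | i :: p' => acc (step F i) p' end.

Definition instr_ok (F : sset) (i : instr) : Prop :=
  match i with
  | IDel _ => True
  | IRup C => RUP (Clause C) F
  | ISr C s => SR (Clause C) s F
  | IWsr C s G => WSR (Clause C) s (ofList G) F
  end.

Fixpoint derivation (F : sset) (p : list instr) : Prop :=
  match p with [] => True | i :: p' => instr_ok F i /\ derivation (step F i) p' end.

Definition refutation (F : sset) (p : list instr) : Prop :=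
  derivation F p /\ conflict (acc F p).

Inductive item : Type :=
| PSubst (s : subst)
| PTest (T : scon)
| PChoice (e1 e2 : list item)
| PIte (T : scon) (e1 e0 : list item).

Definition prog := list item.
Definition dcon := (prog * scon)%type.   (* (e, C) stands for e.C *)
Definition dset := dcon -> Prop.

(* reduct by s of a program (J related to I o s by e  iff  J related to I by e[s]) *)
Fixpoint item_red (s : subst) (it : item) {struct it} : list item :=
  match it with
  | PSubst t => [PSubst (scomp t s)]
  | PTest T => [PTest (sred s T); PSubst s]
  | PChoice e1 e2 =>
      [PChoice (match e1 with [] => [PSubst s] | i :: r => item_red s i ++ r end)
               (match e2 with [] => [PSubst s] | i :: r => item_red s i ++ r end)]
  | PIte T e1 e0 =>
      [PIte (sred s T)
            (match e1 with [] => [PSubst s] | i :: r => item_red s i ++ r end)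
            (match e0 with [] => [PSubst s] | i :: r => item_red s i ++ r end)]
  end.

Definition prog_red (s : subst) (e : prog) : prog :=
  match e with [] => [PSubst s] | i :: r => item_red s i ++ r end.

Definition dred (s : subst) (P : dcon) : dcon :=
  match fst P with
  | [] => ([], sred s (snd P))
  | _ => (prog_red s (fst P), snd P)
  end.

Definition stat (C : scon) : dcon := ([], C).
Definition statset (F : sset) : dset := img stat F.

Definition pre (e : prog) (P : dcon) : dcon := (e ++ fst P, snd P).
Definition dpre (e : prog) (D : dset) : dset := img (pre e) D.
Definition dat (G : dset) (e : prog) : dset := fun P => G (pre e P).
Definition down (G : dset) : dset := fun P => G P /\ fst P = [].

Inductive dyn : dset -> dcon -> Prop :=
| dyn_final (G : dset) (C : scon) :
    (forall P, G P -> fst P = []) ->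
    conflict (setU (fun D => G (stat D)) (set1 (sneg C))) ->
    dyn G (stat C)
| dyn_N1 G s d C : dyn G (dred s (d, C)) -> dyn G (PSubst s :: d, C)
| dyn_N2 G e1 e2 d C :
    dyn G (e1 ++ d, C) -> dyn G (e2 ++ d, C) -> dyn G (PChoice e1 e2 :: d, C)
| dyn_N3 G T d C : dyn (setU G (set1 (stat T))) (d, C) -> dyn G (PTest T :: d, C)
| dyn_N4 G T e1 e0 d C :
    dyn (setU G (set1 (stat T))) (e1 ++ d, C) ->
    dyn (setU G (set1 (stat (sneg T)))) (e0 ++ d, C) ->
    dyn G (PIte T e1 e0 :: d, C)
| dyn_P1 G s (D : list dcon) Q :
    D <> [] -> (forall P, In P D -> G (pre [PSubst s] P)) ->
    dyn (setU (setD G (dpre [PSubst s] (ofList D))) (img (dred s) (ofList D))) Q ->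
    dyn G Q
| dyn_P2 G e1 e2 (D : list dcon) Q :
    D <> [] -> (forall P, In P D -> G (pre [PChoice e1 e2] P)) ->
    dyn (setU (setD G (dpre [PChoice e1 e2] (ofList D)))
              (setU (dpre e1 (ofList D)) (dpre e2 (ofList D)))) Q ->
    dyn G Q
| dyn_P3 G T (D : list dcon) Q :
    D <> [] -> (forall P, In P D -> G (pre [PTest T] P)) ->
    dyn (setU (setD G (dpre [PTest T] (ofList D)))
              (setU (ofList D) (set1 (stat T)))) Q ->
    dyn (setU (setD G (dpre [PTest T] (ofList D))) (set1 (stat (sneg T)))) Q ->
    dyn G Q
| dyn_P4 G T e1 e0 (D : list dcon) Q :
    D <> [] -> (forall P, In P D -> G (pre [PIte T e1 e0] P)) ->
    dyn (setU (setD G (dpre [PIte T e1 e0] (ofList D)))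
              (setU (dpre e1 (ofList D)) (set1 (stat T)))) Q ->
    dyn (setU (setD G (dpre [PIte T e1 e0] (ofList D)))
              (setU (dpre e0 (ofList D)) (set1 (stat (sneg T))))) Q ->
    dyn G Q.

Inductive pterm : Type :=
| Qed_
| Elim (p : pterm)
| Lem (Th : dset) (r p : pterm)
| Ctx (e : prog) (r p : pterm).

(* derives G p D   is   p : G |> D *)
Fixpoint derives (G : dset) (p : pterm) (D : dset) : Prop :=
  match p with
  | Qed_ => forall P, D P -> dyn (down G) P
  | Elim p' => (forall P, down D P -> dyn G P) /\
               derives (setU G (down D)) p' (setD D (down D))
  | Lem Th r p' => derives G r Th /\ derives (setU G Th) p' (setD D Th)
  | Ctx e r p' => derives (dat G e) r (dat D e) /\
                  derives (setU G (dpre e (dat D e))) p' (setD D (dpre e (dat D e)))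
  end.

Definition sr_term (C : list lit) (s : subst) (F' : sset) (t : pterm) : pterm :=
  let e := [PIte (sneg (Clause C)) [PSubst s] []] in
  Lem (set1 (e, botC))
      (Lem (dpre e (statset F')) Qed_ (Ctx e t Qed_))
      (Elim Qed_).

Fixpoint transl (F : sset) (p : list instr) : pterm :=
  match p with
  | [] => Qed_
  | IRup C :: p' => Lem (set1 (stat (Clause C))) Qed_ (transl (setU F (set1 (Clause C))) p')
  | IDel C :: p' => transl (setD F (set1 C)) p'
  | ISr C s :: p' =>
      let F' := setU F (set1 (Clause C)) in sr_term C s F' (transl F' p')
  | IWsr C s G :: p' =>
      let F' := setU (setD F (ofList G)) (set1 (Clause C)) in sr_term C s F' (transl F' p')
  end.

(* The translation keeps the invariant that the context of the proof term contains the
   current accumulated formula as static constraints and that only [[].⊥] remains to be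
   derived.  RUP steps are lemmas proved by unit propagation.  For an SR/WSR step with
   witness σ put ε := if ¬C then ⟨σ⟩: every D of the new formula F' satisfies ε.D
   (the then-branch is the redundancy condition, the else-branch is trivial because C
   then holds), so inside the context ε the recursive term refutes F', giving ε.⊥; and
   ε.⊥ yields ⊥ because in the then-branch ⟨σ⟩.⊥ reduces to ⊥ itself. *)

From Stdlib Require Import List.
Import ListNotations.

Lemma UP_mono (F F' : sset) l : (forall X, F X -> F' X) -> UP F l -> UP F' l.
Proof.
  intros HF U. induction U.
  - constructor.
  - eapply UP_cube; eauto.
  - apply UP_clause; auto.
Qed.

Lemma conflict_mono (F F' : sset) : (forall X, F X -> F' X) -> conflict F -> conflict F'.
Proof.
  intros HF [U | [[x [U1 U2]] | [ls [Hls U]]]].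
  - left; eapply UP_mono; eauto.
  - right; left; exists x; split; eapply UP_mono; eauto.
  - right; right; exists ls; split; auto. intros l Hl; eapply UP_mono; eauto.
Qed.

Lemma lcompl_involutive l : lcompl (lcompl l) = l.
Proof. destruct l; reflexivity. Qed.

Lemma sneg_involutive C : sneg (sneg C) = C.
Proof.
  destruct C; simpl; rewrite map_map;
    (erewrite map_ext; [rewrite map_id; reflexivity | intro; apply lcompl_involutive]).
Qed.

Lemma conflict_sneg (F : sset) C : F C -> F (sneg C) -> conflict F.
Proof.
  intros HC HnC. right; right. destruct C as [ls | ls]; simpl in HnC.
  - exists ls; split; auto. intros l Hl. eapply UP_cube; eauto. apply in_map; auto.
  - exists (map lcompl ls); split; auto. intros l Hl.
    apply in_map_iff in Hl as [l' [<- Hl']]. rewrite lcompl_involutive.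
    eapply UP_cube; eauto.
Qed.

Lemma conflict_botC (F : sset) : F botC -> conflict F.
Proof.
  intros Hbot. right; right. exists [LBot]; split; auto.
  intros l [<- | []]. constructor.
Qed.

Definition static (G : dset) : Prop := forall P, G P -> fst P = [].

Definition stat_part (G : dset) : sset := fun C => G (stat C).

Lemma static_down G : static (down G).
Proof. intros P [_ HP]; exact HP. Qed.

Lemma stat_part_down G (F : sset) :
  static G -> (forall X, F X -> stat_part G X) -> forall X, F X -> stat_part (down G) X.
Proof. intros Gs HF X HX. split; [apply HF; auto | reflexivity]. Qed.

Lemma static_add_stat G C : static G -> static (setU G (set1 (stat C))).
Proof. intros Gs P [HP | ->]; [apply Gs; auto | reflexivity]. Qed.

Lemma dyn_stat G (F : sset) C :
  static G -> (forall X, F X -> stat_part G X) ->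
  conflict (setU F (set1 (sneg C))) -> dyn G (stat C).
Proof.
  intros Gs HF Hc. apply dyn_final; [exact Gs |].
  eapply conflict_mono; [| exact Hc]. intros X [HX | HX]; [left; apply HF; exact HX | right; exact HX].
Qed.

Lemma pre_stat_inv e P C : pre e P = (e, C) -> P = stat C.
Proof.
  destruct P as [d D]. unfold pre. simpl. intros H. injection H as Hd ->.
  rewrite <- (app_nil_r e) in Hd at 2. apply app_inv_head in Hd. subst. reflexivity.
Qed.

Lemma pre_inj e P Q : pre e P = pre e Q -> P = Q.
Proof.
  destruct P, Q. unfold pre. simpl. intros H. injection H as Hd ->.
  apply app_inv_head in Hd. subst. reflexivity.
Qed.

Definition guard (T : scon) (s : subst) : prog := [PIte T [PSubst s] []].

Lemma dyn_guard G T s X :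
  static G ->
  conflict (setU (stat_part G) (setU (set1 T) (set1 (sneg (sred s X))))) ->
  conflict (setU (stat_part G) (setU (set1 (sneg T)) (set1 (sneg X)))) ->
  dyn G (guard T s, X).
Proof.
  intros Gs Hthen Helse. apply dyn_N4; simpl.
  - apply dyn_N1. apply (dyn_stat _ (setU (stat_part G) (set1 T))).
    + apply static_add_stat; exact Gs.
    + intros Y [HY | ->]; [left; exact HY | right; reflexivity].
    + eapply conflict_mono; [| exact Hthen]. intros Y [HY | [HY | HY]].
      * left; left; exact HY.
      * left; right; exact HY.
      * right; exact HY.
  - apply (dyn_stat _ (setU (stat_part G) (set1 (sneg T)))).
    + apply static_add_stat; exact Gs.
    + intros Y [HY | ->]; [left; exact HY | right; reflexivity].
    + eapply conflict_mono; [| exact Helse]. intros Y [HY | [HY | HY]].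
      * left; left; exact HY.
      * left; right; exact HY.
      * right; exact HY.
Qed.

(* In the then-branch [⟨σ⟩.⊥] reduces to [⊥] since σ fixes [⊥]; in the else-branch the
   constraint is [⊥] itself. *)
Lemma dyn_bot_of_guard_bot G T s :
  static G -> dyn (setU G (set1 (guard T s, botC))) (stat botC).
Proof.
  intros Gs. set (B := ([] : prog, botC)).
  apply (dyn_P4 _ T [PSubst s] [] [B]); [discriminate | intros P [<- | []]; right; reflexivity | |].
  - apply (dyn_P1 _ s [B]); [discriminate | |].
    + intros P [<- | []]. right; left. exists B. split; [left | ]; reflexivity.
    + apply dyn_final.
      * intros P [[[[[HP | HP] Hn1] | [HP | HP]] Hn2] | HP].
        -- apply Gs; exact HP.
        -- exfalso; apply Hn1. exists B. split; [left | rewrite HP]; reflexivity.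
        -- exfalso; apply Hn2; exact HP.
        -- rewrite HP; reflexivity.
        -- destruct HP as [a [[<- | []] ->]]; reflexivity.
      * apply conflict_botC. left; right. exists B; split; [left |]; reflexivity.
  - apply dyn_final.
    + intros P [[[HP | HP] Hn1] | [HP | HP]].
      * apply Gs; exact HP.
      * exfalso; apply Hn1. exists B. split; [left | rewrite HP]; reflexivity.
      * destruct HP as [a [[<- | []] ->]]; reflexivity.
      * rewrite HP; reflexivity.
    + apply conflict_botC. left; right; left. exists B; split; [left |]; reflexivity.
Qed.

Lemma derives_qed_empty G (D : dset) : (forall P, ~ D P) -> derives G Qed_ D.
Proof. intros HD P HP. exfalso; exact (HD P HP). Qed.

Lemma derives_elim_static G D :
  static D -> (forall P, D P -> dyn G P) -> derives G (Elim Qed_) D.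
Proof.
  intros Ds HD. split.
  - intros P [HP _]; auto.
  - apply derives_qed_empty. intros P [HP Hn]. apply Hn; split; auto.
Qed.

Definition only_bot (D : dset) : Prop := forall P, D P -> P = stat botC.

Lemma dat_guard_context G T s (F : sset) :
  static G ->
  static (dat (setU G (dpre (guard T s) (statset F))) (guard T s)) /\
  (forall X, F X -> stat_part (dat (setU G (dpre (guard T s) (statset F))) (guard T s)) X).
Proof.
  intros Gs. split.
  - intros P [HP | [a [[X [_ ->]] Ha]]].
    + apply Gs in HP. discriminate.
    + apply pre_inj in Ha. subst. reflexivity.
  - intros X HX. right. exists (stat X). split; [exists X; auto | reflexivity].
Qed.

Section SubstitutionRedundancy.

Variables (F F' : sset) (C : list lit) (s : subst).

Hypothesis F'_sub : forall X, F' X -> F X \/ X = Clause C.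
Hypothesis F'_redundant : forall X, F' X ->
  conflict (setU F (setU (set1 (sneg (Clause C))) (set1 (sneg (sred s X))))).

Lemma dyn_guard_sr G X :
  static G -> (forall Y, F Y -> stat_part G Y) -> F' X ->
  dyn G (guard (sneg (Clause C)) s, X).
Proof.
  intros Gs HF HX. apply dyn_guard; [exact Gs | |].
  - eapply conflict_mono; [| exact (F'_redundant X HX)].
    intros Y [HY | HY]; [left; apply HF; exact HY | right; exact HY].
  - rewrite sneg_involutive. apply (conflict_sneg _ X); [| right; right; reflexivity].
    destruct (F'_sub X HX) as [HXF | ->]; [left; apply HF; exact HXF | right; left; reflexivity].
Qed.

Lemma sr_term_derives G D t :
  static G -> (forall X, F X -> stat_part G X) -> only_bot D ->
  (forall G0 D0, static G0 -> (forall X, F' X -> stat_part G0 X) -> only_bot D0 ->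
     derives G0 t D0) ->
  derives G (sr_term C s F' t) D.
Proof.
  intros Gs HF Dbot Ht.
  assert (Hctx := dat_guard_context G (sneg (Clause C)) s F' Gs).
  unfold sr_term. cbn [derives]. split; [split; [| split] |].
  - intros P [a [[X [HX ->]] ->]].
    apply dyn_guard_sr; [apply static_down | apply stat_part_down; auto | exact HX].
  - apply Ht; [apply Hctx | apply Hctx |].
    intros P [HP _]. apply pre_stat_inv in HP. exact HP.
  - apply derives_qed_empty. intros P [[HP Hn] Hn']. apply Hn'.
    unfold set1 in HP. subst. exists (stat botC).
    split; [split; [reflexivity | exact Hn] | reflexivity].
  - apply derives_elim_static.
    + intros P [HP _]. rewrite (Dbot P HP). reflexivity.
    + intros P [HP _]. rewrite (Dbot P HP). apply dyn_bot_of_guard_bot; exact Gs.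
Qed.

End SubstitutionRedundancy.

Lemma transl_derives p : forall (F : sset) (G D : dset),
  derivation F p -> conflict (acc F p) ->
  static G -> (forall X, F X -> stat_part G X) -> only_bot D ->
  derives G (transl F p) D.
Proof.
  induction p as [| i p IH]; intros F G D Hder Hc Gs HF Dbot.
  - intros P HP. rewrite (Dbot P HP).
    apply (dyn_stat _ F); [apply static_down | apply stat_part_down; auto |].
    eapply conflict_mono; [| exact Hc]. intros X HX; left; exact HX.
  - destruct Hder as [Hok Hder].
    destruct i as [C | C | C s | C s G0]; simpl in Hok, Hc; cbn [transl].
    + apply IH; auto. intros X [HX _]; apply HF; exact HX.
    + split.
      * intros P ->. apply (dyn_stat _ F); [apply static_down | apply stat_part_down; auto |].
        exact Hok.
      * apply IH; auto.
        -- intros P [HP | ->]; [apply Gs; auto | reflexivity].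
        -- intros X [HX | ->]; [left; apply HF; exact HX | right; reflexivity].
        -- intros P [HP _]; auto.
    + destruct Hok as [Hbot Hred]. apply (sr_term_derives F); auto.
      intros X [HX | ->]; [apply Hred; exact HX |].
      eapply conflict_mono; [| exact Hbot]. intros Y ->. right; right; reflexivity.
    + apply (sr_term_derives F); auto. intros X [[HX _] | ->]; auto.
Qed.

Theorem mainTheorem6 (F : list scon) (pi : list instr) :
  refutation (ofList F) pi ->
  derives (statset (ofList F)) (transl (ofList F) pi) (set1 (stat botC)).
Proof.
  intros [Hder Hc]. apply transl_derives; auto.
  - intros P [a [_ ->]]. reflexivity.
  - intros X HX. exists X; auto.
  - intros P HP. exact HP.
Qed.
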